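(* Let $\mathcal{G}=(V,\emptyset,B)$ be a connected bidirected graph with $V=\{1,\dots,p\}$, and let $q\in\mathbb{R}^p$ be a vector with all entries nonzero. Then there exists $\Sigma\in PD(\mathcal{G})$ such that the vector $\Sigma q$ has precisely one nonzero entry.
   Context: $B$ is a set of 2-element subsets of $V$ (bidirected edges); $\mathcal{G}$ is connected if any two vertices are joined by a path of such edges. $PD(\mathcal{G})$ is the set of positive definite $p\times p$ matrices $\Sigma=(\sigma_{ij})$ with $\sigma_{ij}=0$ whenever $i\ne j$ and $\{i,j\}\notin B$. *)

From HB Require Import structures.
From mathcomp Require Import all_boot all_order all_algebra.
Set Implicit Arguments. Unset Strict Implicit. Unset Printing Implicit Defensive.
Import Order.TTheory GRing.Theory Num.Theory.
Local Open Scope ring_scope.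

(* A bidirected graph on V = 'I_p (vertices 0..p-1 stand for 1..p) is given by
   its edge relation B : rel 'I_p; {i,j} \in B is encoded as B i j (= B j i). *)
Definition bidirected_graph (p : nat) (B : rel 'I_p) : Prop :=
  symmetric B /\ irreflexive B.

Definition graph_connected (p : nat) (B : rel 'I_p) : Prop :=
  forall i j : 'I_p, connect B i j.

Definition posdef (R : realFieldType) (p : nat) (S : 'M[R]_p) : Prop :=
  S^T = S /\ forall x : 'cV[R]_p, x != 0 -> 0 < (x^T *m S *m x) 0 0.

Definition PD_G (R : realFieldType) (p : nat) (B : rel 'I_p) (S : 'M[R]_p) : Prop :=
  posdef S /\ forall i j : 'I_p, i != j -> ~~ B i j -> S i j = 0.

From HB Require Import structures.
From mathcomp Require Import all_boot all_order all_algebra.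
Set Implicit Arguments. Unset Strict Implicit. Unset Printing Implicit Defensive.
Import Order.TTheory GRing.Theory Num.Theory.
Local Open Scope ring_scope.

(* Root a breadth-first spanning tree of G at r, with parent map par. For every
   v != r the vector q_(par v) e_v - q_v e_(par v) is orthogonal to q and
   supported on the tree edge {v, par v}; together with e_r these p vectors a_v
   are linearly independent (a vector orthogonal to all of them vanishes at r,
   hence down the tree). So S = \sum_v a_v a_v^T lies in PD(G), and S q = q_r e_r. *)

Section SumOfOuterProducts.
Variables (R : realFieldType) (p : nat).

Lemma mulmx_outer_quad (u x : 'cV[R]_p) :
  (x^T *m (u *m u^T) *m x) 0 0 = ((u^T *m x) 0 0) ^+ 2.
Proof.
have -> : x^T *m (u *m u^T) *m x = (u^T *m x)^T *m (u^T *m x).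
  by rewrite trmx_mul trmxK !mulmxA.
by rewrite mxE big_ord1 mxE expr2.
Qed.

Lemma outer_entry (u : 'cV[R]_p) i j : (u *m u^T) i j = u i 0 * u j 0.
Proof. by rewrite mxE big_ord1 mxE. Qed.

Lemma posdef_sum_outer (I : finType) (u : I -> 'cV[R]_p) :
  (forall x : 'cV_p, (forall k, ((u k)^T *m x) 0 0 = 0) -> x = 0) ->
  posdef (\sum_k u k *m (u k)^T : 'M_p).
Proof.
move=> u_span; split.
  by rewrite linear_sum; apply: eq_bigr => k _ /=; rewrite trmx_mul trmxK.
move=> x x_neq0; rewrite mulmx_sumr mulmx_suml summxE.
under eq_bigr => k _ do rewrite mulmx_outer_quad.
rewrite lt_def sumr_ge0 ?andbT => [|k _]; last exact: sqr_ge0.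
apply: contra x_neq0 => /eqP sum_eq0; apply/eqP/u_span => k.
apply/eqP; rewrite -sqrf_eq0; apply/eqP.
by move/psumr_eq0P: sum_eq0; apply=> // j _; exact: sqr_ge0.
Qed.

Lemma outer_entry_neq0 (u : 'cV[R]_p) i j :
  (u *m u^T) i j != 0 -> (u i 0 != 0) && (u j 0 != 0).
Proof. by rewrite outer_entry mulf_eq0 negb_or. Qed.

Lemma trmx_delta_mul (i : 'I_p) (x : 'cV[R]_p) :
  (delta_mx i 0 : 'cV_p)^T *m x = row i x.
Proof. by rewrite trmx_delta -rowE. Qed.

End SumOfOuterProducts.

Section BreadthFirstTree.
Variables (T : finType) (e : rel T) (r : T).
Hypothesis r_connect : forall v, connect e r v.

Definition reachable_in (n : nat) (v : T) : bool :=
  [exists s : n.-tuple T, path e r s && (last r s == v)].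

Lemma reachable_in_size (s : seq T) :
  path e r s -> reachable_in (size s) (last r s).
Proof. by move=> ers; apply/existsP; exists (in_tuple s); rewrite ers eqxx. Qed.

Lemma exists_reachable_in v : exists n, reachable_in n v.
Proof.
have /connectP [s ers ->] := r_connect v.
by exists (size s); exact: reachable_in_size.
Qed.

Definition tree_depth (v : T) : nat := ex_minn (exists_reachable_in v).

Lemma exists_parent v :
  v != r -> exists2 u, e u v & (tree_depth u < tree_depth v)%N.
Proof.
rewrite /tree_depth; case: ex_minnP => n /existsP [[s /= /eqP size_s]].
move=> /andP [ers /eqP last_s] _ v_neq_r.
case/lastP: s size_s ers last_s => [_ _ r_v | s u]; first by rewrite -r_v eqxx in v_neq_r.
rewrite size_rcons rcons_path last_rcons => <- /andP [ers e_last] u_v.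
exists (last r s); first by rewrite -u_v.
case: ex_minnP => m _ m_min.
by rewrite ltnS; apply: m_min; exact: reachable_in_size.
Qed.

Definition tree_parent (v : T) : T :=
  odflt r [pick u | e u v & (tree_depth u < tree_depth v)%N].

Lemma tree_parentP v :
  v != r -> e (tree_parent v) v && (tree_depth (tree_parent v) < tree_depth v)%N.
Proof.
move=> /exists_parent [u euv lt_uv]; rewrite /tree_parent; case: pickP => [w // | none].
by have := none u; rewrite euv lt_uv.
Qed.

End BreadthFirstTree.

Section TreeCovariance.
Variables (R : realFieldType) (p : nat) (B : rel 'I_p) (r : 'I_p).
Hypothesis r_connect : forall v, connect B r v.
Variable q : 'cV[R]_p.
Hypothesis q_neq0 : forall i, q i 0 != 0.

Let par := tree_parent r_connect.

Definition tree_vec (v : 'I_p) : 'cV[R]_p :=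
  if v == r then delta_mx r 0
  else q (par v) 0 *: delta_mx v 0 - q v 0 *: delta_mx (par v) 0.

Lemma tree_vec_mul v (x : 'cV[R]_p) : v != r ->
  ((tree_vec v)^T *m x) 0 0 = q (par v) 0 * x v 0 - q v 0 * x (par v) 0.
Proof.
move=> /negbTE v_neq_r; rewrite /tree_vec v_neq_r linearB /= !linearZ /=.
by rewrite scalerN mulmxBl -!scalemxAl !trmx_delta_mul !mxE.
Qed.

Lemma orthogonal_tree_vec_eq0 (x : 'cV[R]_p) :
  (forall v, ((tree_vec v)^T *m x) 0 0 = 0) -> x = 0.
Proof.
move=> x_orth; apply/matrixP => i j; rewrite ord1 mxE.
have [n] := ubnP (tree_depth r_connect i); elim: n i => // n IHn v /ltnSE le_v_n.
have [-> | v_neq_r] := eqVneq v r.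
  by have := x_orth r; rewrite /tree_vec eqxx trmx_delta_mul mxE.
have /andP [_ lt_par] := tree_parentP r_connect v_neq_r.
have := x_orth v.
rewrite tree_vec_mul // (IHn (par v)) ?(leq_trans lt_par) // mulr0 subr0.
by move/eqP; rewrite mulf_eq0 (negbTE (q_neq0 _)) => /eqP.
Qed.

Lemma tree_vec_support_edge v i j : symmetric B -> i != j ->
  tree_vec v i 0 != 0 -> tree_vec v j 0 != 0 -> B i j.
Proof.
move=> B_sym i_neq_j; rewrite /tree_vec; have [_ | v_neq_r] := eqVneq v r.
  rewrite !mxE !andbT !pnatr_eq0 !eqb0 !negbK => /eqP i_r /eqP j_r.
  by rewrite i_r j_r eqxx in i_neq_j.
have /andP [B_par _] := tree_parentP r_connect v_neq_r.
have support k :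
    q (par v) 0 * (k == v)%:R - q v 0 * (k == par v)%:R != 0 ->
    (k == v) || (k == par v).
  by case: (k == v); case: (k == par v); rewrite ?mulr0 ?subrr ?eqxx.
rewrite !mxE !andbT => /support /orP [] /eqP i_eq /support /orP [] /eqP j_eq; subst i j;
  by rewrite ?eqxx // B_sym in i_neq_j *.
Qed.

Definition tree_cov : 'M[R]_p := \sum_v tree_vec v *m (tree_vec v)^T.

Lemma tree_cov_PD : symmetric B -> PD_G B tree_cov.
Proof.
move=> B_sym; split; first exact: posdef_sum_outer orthogonal_tree_vec_eq0.
move=> i j i_neq_j not_Bij; rewrite summxE big1 // => v _.
apply/eqP; apply: contraTT not_Bij => /outer_entry_neq0 /andP [vi vj].
by rewrite negbK (tree_vec_support_edge B_sym i_neq_j vi vj).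
Qed.

Lemma tree_cov_mul : tree_cov *m q = q r 0 *: delta_mx r 0.
Proof.
rewrite /tree_cov mulmx_suml (bigD1 r) //= big1 ?addr0 => [|v v_neq_r].
  rewrite /tree_vec eqxx -mulmxA trmx_delta_mul -mul_mx_scalar; congr (_ *m _).
  by apply/matrixP => i j; rewrite !ord1 !mxE eqxx.
rewrite -mulmxA; have -> : (tree_vec v)^T *m q = 0.
  by apply/matrixP => i j; rewrite !ord1 tree_vec_mul // mulrC subrr mxE.
exact: mulmx0.
Qed.

End TreeCovariance.

Theorem lemma7 (R : rcfType) (p : nat) (B : rel 'I_p) (hp : (0 < p)%N)
  (hB : bidirected_graph B) (hconn : graph_connected B)
  (q : 'cV[R]_p) (hq : forall i : 'I_p, q i 0 != 0) :
  exists S : 'M[R]_p, PD_G B S /\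
    exists i : 'I_p, (S *m q) i 0 != 0 /\
      forall j : 'I_p, j != i -> (S *m q) j 0 = 0.
Proof.
pose r := Ordinal hp.
have r_connect v : connect B r v by exact: hconn.
exists (tree_cov r_connect q); split; first exact: tree_cov_PD hq hB.1.
exists r; rewrite tree_cov_mul !mxE eqxx mulr1; split => [|j j_neq_r].
  exact: hq.
by rewrite !mxE (negbTE j_neq_r) mulr0.
Qed.
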